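(* Let $G$ be a torsionless abelian group that binds some subgroup of infinite rank. Then there is a surjective homomorphism from $G$ onto a subgroup $G'$ of $\mathbb{Z}^{\omega}$ such that the subgroup $G'+\mathbb{Z}^{(\omega)}$ of $\mathbb{Z}^\omega$ binds $\mathbb{Z}^{(\omega)}$.
   Context: All groups are abelian. $\mathbb{Z}^{\omega}$ is the product of countably many copies of $\mathbb{Z}$, and $\mathbb{Z}^{(\omega)}\subseteq\mathbb{Z}^\omega$ is the subgroup of sequences with only finitely many nonzero entries. A group is torsionless if it embeds in $\mathbb{Z}^I$ for some set $I$. Rank means torsion-free rank. A group $G$ binds a subgroup $H$ if every homomorphism from $G$ to a free abelian group maps $H$ into a group of finite rank. *)

From HB Require Import structures.
From mathcomp Require Import all_boot all_order all_algebra.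
From mathcomp Require Import boolp classical_sets functions.
Set Implicit Arguments. Unset Strict Implicit. Unset Printing Implicit Defensive.
Import Order.TTheory GRing.Theory Num.Theory.
Local Open Scope ring_scope.
Local Open Scope classical_set_scope.

Definition is_subgroup (K : zmodType) (H : set K) : Prop :=
  H 0 /\ forall x y, H x -> H y -> H (x - y).

Definition hom_on (K F : zmodType) (A : set K) (f : K -> F) : Prop :=
  forall x y, A x -> A y -> f (x + y) = f x + f y.

Definition Zindep (K : zmodType) (m : nat) (v : 'I_m -> K) : Prop :=
  forall c : 'I_m -> int, \sum_(k < m) v k *~ c k = 0 -> forall k, c k = 0.

Definition finite_rank (K : zmodType) (S : set K) : Prop :=
  exists n : nat, forall (m : nat) (v : 'I_m -> K),
    (forall k, S (v k)) -> Zindep v -> (m <= n)%N.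

Definition free_abelian (F : zmodType) : Prop :=
  exists (I : Type) (b : I -> F),
    (forall (m : nat) (idx : 'I_m -> I), injective idx ->
        Zindep (fun k => b (idx k))) /\
    (forall x : F, exists (m : nat) (idx : 'I_m -> I) (c : 'I_m -> int),
        x = \sum_(k < m) b (idx k) *~ c k).

Definition binds_in (K : zmodType) (A H : set K) : Prop :=
  forall (F : zmodType) (f : K -> F), free_abelian F -> hom_on A f ->
    finite_rank (f @` H).

Definition binds (G : zmodType) (H : set G) : Prop := binds_in setT H.

(* torsionless: embeds in Z^I for some set I *)
Definition torsionless (G : zmodType) : Prop :=
  exists (I : Type) (f : G -> (I -> int)),
    (forall x y, f (x + y) = f x + f y) /\ injective f.

Definition Zomega := nat -> int.
Definition Zfin : set Zomega :=
  [set y | exists N : nat, forall n, (N <= n)%N -> y n = 0].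

(* Embed G in Z^I. Because H has infinite rank, for any finitely many elements
   of G linear algebra over Q on finitely many coordinates yields a homomorphism
   G -> Z, an integer combination of coordinates, that kills them but not some
   element of H. Iterating gives psi_n : G -> Z and h_n in H with
   psi_n (h_n) <> 0 and psi_k (h_n) = 0 for n < k. By this triangularity every
   finitely supported sequence has a nonzero multiple in phi(H), where
   phi = (psi_n)_n : G -> Z^omega. A homomorphism f from phi(G) + Z^(omega) to a
   free group composed with phi maps H, hence f(phi(H)), into finite rank, and
   f(Z^(omega)) has finite rank since each of its elements has a nonzero
   multiple in f(phi(H)). *)

From mathcomp Require Import all_boot all_order all_algebra.
From mathcomp Require Import boolp classical_sets functions.
Set Implicit Arguments. Unset Strict Implicit. Unset Printing Implicit Defensive.
Import GRing.Theory.
Local Open Scope ring_scope.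
Local Open Scope classical_set_scope.

Section Subgroup.
Variables (K : zmodType) (A : set K).
Hypothesis subA : is_subgroup A.

Lemma subgroup0 : A 0. Proof. by case: subA. Qed.

Lemma subgroupB x y : A x -> A y -> A (x - y). Proof. by case: subA => _; apply. Qed.

Lemma subgroupN x : A x -> A (- x).
Proof. by rewrite -sub0r; apply/subgroupB/subgroup0. Qed.

Lemma subgroupD x y : A x -> A y -> A (x + y).
Proof. by move=> Ax /subgroupN Ay; rewrite -[y]opprK; apply: subgroupB. Qed.

Lemma subgroupMn x n : A x -> A (x *+ n).
Proof.
move=> Ax; elim: n => [|n IH]; first by rewrite mulr0n; apply: subgroup0.
by rewrite mulrS; apply: subgroupD.
Qed.

Lemma subgroupMz x k : A x -> A (x *~ k).
Proof. by case: k => n Ax; [|apply: subgroupN]; apply: subgroupMn. Qed.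

Variables (F : zmodType) (f : K -> F).
Hypothesis fA : hom_on A f.

Lemma hom_on0 : f 0 = 0.
Proof.
have A0 := subgroup0.
by apply: (addrI (f 0)); rewrite -fA // !addr0.
Qed.

Lemma hom_onN x : A x -> f (- x) = - f x.
Proof.
by move=> Ax; apply: (addrI (f x)); rewrite -fA ?subrr ?hom_on0 //; apply: subgroupN.
Qed.

Lemma hom_onMn x n : A x -> f (x *+ n) = f x *+ n.
Proof.
move=> Ax; elim: n => [|n IH]; first by rewrite !mulr0n hom_on0.
by rewrite !mulrS fA ?IH //; apply: subgroupMn.
Qed.

Lemma hom_onMz x k : A x -> f (x *~ k) = f x *~ k.
Proof.
case: k => n Ax /=; first exact: hom_onMn.
by rewrite hom_onN ?hom_onMn //; apply: subgroupMn.
Qed.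

End Subgroup.

Lemma subgroupT (K : zmodType) : is_subgroup [set: K].
Proof. by []. Qed.

Section Additive.
Variables (K F : zmodType) (f : K -> F).
Hypothesis fD : {morph f : x y / x + y}.

Lemma additive_hom_on : hom_on [set: K] f.
Proof. by move=> x y _ _; apply: fD. Qed.

Lemma additive0 : f 0 = 0.
Proof. exact (hom_on0 (subgroupT K) additive_hom_on). Qed.

Lemma additiveN x : f (- x) = - f x.
Proof. exact (hom_onN (subgroupT K) additive_hom_on I). Qed.

Lemma additiveMz x k : f (x *~ k) = f x *~ k.
Proof. exact (hom_onMz (subgroupT K) additive_hom_on k I). Qed.

Lemma Zindep_inj m (v : 'I_m -> K) :
  injective f -> Zindep v -> Zindep (f \o v).
Proof.
move=> f_inj v_indep c /= sum0; apply: v_indep; apply: f_inj.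
rewrite additive0 -sum0 (big_morph f fD additive0).
by apply: eq_bigr => k _; rewrite additiveMz.
Qed.

End Additive.

Lemma fct_mulrzE (T : Type) (K : zmodType) (f : T -> K) k x :
  (f *~ k) x = f x *~ k.
Proof. by case: k => n; rewrite ?NegzE ?mulrNz -!pmulrn natmulfctE. Qed.

Lemma clear_denominators p (y : 'I_p -> rat) :
  exists (D : int) (a : 'I_p -> int), D != 0 /\ forall k, y k * D%:~R = (a k)%:~R.
Proof.
exists (\prod_k denq (y k)), (fun k => numq (y k) * \prod_(k' | k' != k) denq (y k')).
split; first by apply/prodf_neq0 => k _; rewrite denq_neq0.
by move=> k; rewrite (bigD1 k) //= !intrM numqE mulrA.
Qed.

Lemma clear_denominators_sum p (x a : 'I_p -> int) (y : 'I_p -> rat) (D : int) :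
  (forall k, y k * D%:~R = (a k)%:~R) ->
  (\sum_k (x k)%:~R * y k) * D%:~R = (\sum_k x k * a k)%:~R.
Proof.
move=> ya; rewrite mulr_suml rmorph_sum; apply: eq_bigr => k _.
by rewrite -mulrA ya -intrM.
Qed.

Section CoordinateMatrices.
Variable I : Type.

Definition coord_mx m (v : 'I_m -> I -> int) p (J : nat -> I) : 'M[rat]_(m, p) :=
  \matrix_(j, k) (v j (J k))%:~R.

Definition coord_functional p (J : nat -> I) (w : 'I_p -> int) (x : I -> int) :=
  \sum_(k < p) x (J k) * w k.

Lemma coord_functionalD p (J : nat -> I) (w : 'I_p -> int) :
  {morph coord_functional J w : x y / x + y}.
Proof. by move=> x y; rewrite -big_split; apply: eq_bigr => k _; rewrite mulrDl. Qed.

Lemma coord_functional_mx m (u : 'I_m -> I -> int) p q (J : nat -> I)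
    (Y : 'M[rat]_(p, q)) k (D : int) (a : 'I_p -> int) :
  (forall t, Y t k * D%:~R = (a t)%:~R) ->
  forall j, (coord_functional J a (u j))%:~R = (coord_mx u p J *m Y) j k * D%:~R.
Proof.
move=> Ya j; rewrite -(clear_denominators_sum _ Ya) mxE.
by congr (_ * _); apply: eq_bigr => t _; rewrite mxE.
Qed.

Lemma coord_mx_cons m (v : 'I_m -> I -> int) p (J : nat -> I) i :
  coord_mx v (1 + p) (fun k => if k is k'.+1 then J k' else i) =
  row_mx (coord_mx v 1 (fun=> i)) (coord_mx v p J).
Proof.
apply/matrixP => j k; rewrite !mxE; case: splitP => [k0 | k'] /= ->; rewrite !mxE //.
by case: k0 => [[]].
Qed.

Variables (m : nat) (v : 'I_m -> I -> int).
Hypothesis v_indep : Zindep v.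

Lemma Zindep_rat (c : 'rV[rat]_m) :
  (forall i, c *m coord_mx v 1 (fun=> i) = 0) -> c = 0.
Proof.
move=> c_ker; have [D [a [D0 ca]]] := clear_denominators (c 0).
have a0 : forall k, a k = 0.
  apply: v_indep; apply/funext => i; rewrite fct_sumE /=.
  under eq_bigr do rewrite fct_mulrzE mulrzz.
  apply/eqP; rewrite -(intr_eq0 rat) -(clear_denominators_sum _ ca) mulf_eq0.
  apply/orP; left; apply/eqP.
  have := congr1 (fun M : 'M[rat]_1 => M 0 0) (c_ker i); rewrite !mxE.
  by apply: etrans; apply: eq_bigr => k _; rewrite !mxE mulrC.
apply/rowP => k; rewrite mxE; apply/eqP.
by have /eqP := ca k; rewrite a0 mulf_eq0 intr_eq0 (negbTE D0) orbF.
Qed.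

Lemma coord_mx_full_rank (i0 : I) : exists p (J : nat -> I), \rank (coord_mx v p J) = m.
Proof.
pose P r := `[< exists p (J : nat -> I), \rank (coord_mx v p J) = r >].
have P_ex : exists r, P r.
  by exists (\rank (coord_mx v 0 (fun=> i0))); apply/asboolP; exists 0%N, (fun=> i0).
have P_ub r : P r -> (r <= m)%N by move=> /asboolP [p [J <-]]; apply: rank_leq_row.
have [r /asboolP [p [J rk]] r_max] := ex_maxnP P_ex P_ub.
exists p, J; apply/eqP; rewrite eqn_leq rank_leq_row /= leqNgt rk.
apply/negP => r_lt_m; set V := coord_mx v p J in rk.
have [c c_ker c_neq0] : exists2 c : 'rV_m, c *m V = 0 & c != 0.
  have /rowV0Pn [c c_sub c_neq0] : kermx V != 0.
    by rewrite -mxrank_eq0 mxrank_ker subn_eq0 -ltnNge rk.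
  by exists c => //; apply/sub_kermxP.
(* Adjoining a coordinate i cannot raise the rank, so it leaves the kernel
   unchanged: c also kills coordinate i. *)
move/eqP: c_neq0; apply; apply: Zindep_rat => i.
set X := coord_mx v 1 (fun=> i).
have rk_ext : (\rank (row_mx X V) <= r)%N.
  apply: r_max; apply/asboolP; exists (1 + p)%N, (fun k => if k is k'.+1 then J k' else i).
  by rewrite coord_mx_cons.
have ker_sub : (kermx (row_mx X V) <= kermx V)%MS.
  rewrite sub_kermx; have /eqP := mulmx_ker (row_mx X V).
  by rewrite mul_mx_row row_mx_eq0 => /andP[_].
have ker_eq : (kermx V <= kermx (row_mx X V))%MS.
  rewrite -(mxrank_leqif_sup ker_sub).2 eqn_leq mxrankS // !mxrank_ker rk.
  by rewrite leq_sub2l.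
have c_sub : (c <= kermx V)%MS by apply/sub_kermxP.
have /sub_kermxP := submx_trans c_sub ker_eq.
by rewrite mul_mx_row => /eqP; rewrite row_mx_eq0 => /andP[/eqP].
Qed.

Lemma exists_separating_coord_functional n (L : 'I_n -> I -> int) : (n < m)%N ->
  exists p (J : nat -> I) (w : 'I_p -> int),
    (forall t, coord_functional J w (L t) = 0) /\
    exists j, coord_functional J w (v j) != 0.
Proof.
move=> n_lt_m; have [i0] : inhabited I.
  apply: contrapT => noI.
  have all0 (x : I -> int) : x = 0 by apply/funext => i; case: noI; exists.
  by have := @v_indep (fun=> 1) (all0 _) (Ordinal (leq_ltn_trans (leq0n n) n_lt_m)).
have [p [J rk]] := coord_mx_full_rank i0.
set V := coord_mx v p J in rk; set W := cokermx (coord_mx L p J).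
have /matrix0Pn [j [k VW_jk]] : V *m W != 0.
  rewrite -submxE; apply/negP => /mxrankS; rewrite rk.
  by move=> /leq_trans/(_ (rank_leq_row _)); rewrite leqNgt n_lt_m.
have [D [a [D0 Wa]]] := clear_denominators (W ^~ k).
exists p, J, a; split.
  move=> t; apply/eqP; rewrite -(intr_eq0 rat) (coord_functional_mx _ _ Wa).
  by rewrite mulmx_coker mxE mul0r.
by exists j; rewrite -(intr_eq0 rat) (coord_functional_mx _ _ Wa) mulf_neq0 ?intr_eq0.
Qed.

End CoordinateMatrices.

Lemma finite_rank_multiples (F : zmodType) (S T : set F) :
  finite_rank T -> (forall x, S x -> exists2 d : int, d != 0 & T (x *~ d)) ->
  finite_rank S.
Proof.
move=> [N rkT] ST; exists N => m v Sv v_indep.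
have /choice [d dP] : forall k, exists d : int, d != 0 /\ T (v k *~ d).
  by move=> k; have [d d0 Td] := ST _ (Sv k); exists d.
apply: (rkT m (fun k => v k *~ d k)) => [k | c sum0 k]; first by case: (dP k).
have /eqP : d k * c k = 0.
  apply: (v_indep (fun k => d k * c k)); apply: etrans sum0.
  by apply: eq_bigr => i _; rewrite mulrzA.
by rewrite mulf_eq0 (negbTE (dP k).1) => /eqP.
Qed.

Section ImageAddSubgroup.
Variables (G K : zmodType) (phi : G -> K) (B : set K).
Hypotheses (phiD : {morph phi : x y / x + y}) (subB : is_subgroup B).

Definition im_add : set K := [set z | exists g y, B y /\ z = phi g + y].

Lemma is_subgroup_im_add : is_subgroup im_add.
Proof.
split; first by exists 0, 0; split; [exact: subgroup0 | rewrite (additive0 phiD) addr0].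
move=> _ _ [g1 [y1 [By1 ->]]] [g2 [y2 [By2 ->]]].
exists (g1 - g2), (y1 - y2); split; first exact: subgroupB.
by rewrite phiD (additiveN phiD) opprD addrACA.
Qed.

Lemma binds_in_im_add (H : set G) : binds H ->
  (forall z, B z -> exists2 d : int, d != 0 & exists2 g, H g & z *~ d = phi g) ->
  binds_in im_add B.
Proof.
move=> bindsH B_mult F f freeF f_hom.
have BA y : B y -> im_add y by exists 0, y; rewrite (additive0 phiD) add0r.
have phiA g : im_add (phi g) by exists g, 0; split; [exact: subgroup0 | rewrite addr0].
have fphi_hom : hom_on [set: G] (f \o phi) by move=> x y _ _ /=; rewrite phiD f_hom.
apply: finite_rank_multiples (bindsH F _ freeF fphi_hom) _ => _ [z Bz <-].
have [d d0 [g Hg zd]] := B_mult z Bz.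
by exists d => //; exists g => //=; rewrite -zd (hom_onMz is_subgroup_im_add f_hom) //; exact: BA.
Qed.

End ImageAddSubgroup.

Lemma is_subgroup_Zfin : is_subgroup Zfin.
Proof.
split; first by exists 0%N.
move=> y z [N yN] [M zM]; exists (maxn N M) => n; rewrite geq_max => /andP[Nn Mn].
by rewrite opprfctE addrfctE /= yN ?zM ?subrr.
Qed.

Definition prod_map (G : zmodType) (psi : nat -> G -> int) (g : G) : Zomega :=
  fun n => psi n g.

Lemma prod_mapD (G : zmodType) (psi : nat -> G -> int) :
  (forall n, {morph psi n : x y / x + y}) -> {morph prod_map psi : x y / x + y}.
Proof. by move=> psiD x y; apply/funext => n; rewrite /prod_map psiD. Qed.

Section TriangularSystem.
Variables (G : zmodType) (H : set G) (psi : nat -> G -> int) (h : nat -> G).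
Hypotheses (subH : is_subgroup H) (psiD : forall n, {morph psi n : x y / x + y}).
Hypotheses (Hh : forall n, H (h n)) (psi_hh : forall n, psi n (h n) != 0).
Hypothesis psi_h : forall n k, (n < k)%N -> psi k (h n) = 0.

Lemma Zfin_multiple_in_image (z : Zomega) :
  Zfin z -> exists2 d : int, d != 0 & exists2 g, H g & z *~ d = prod_map psi g.
Proof.
have phiD := prod_mapD psiD.
case=> N; elim: N z => [|N IH] z zN.
  exists 1 => //; exists 0; first exact: subgroup0.
  have -> : z = 0 by apply/funext => n; apply: zN.
  by rewrite mul0rz additive0.
pose z' := z *~ psi N (h N) - prod_map psi (h N) *~ z N.
have [|d d0 [g Hg z'd]] := IH z'.
  move=> k; rewrite /z' opprfctE addrfctE /= !fct_mulrzE /prod_map.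
  rewrite leq_eqVlt => /orP[/eqP <- | N_lt_k]; first by rewrite !mulrzz mulrC subrr.
  by rewrite (zN k N_lt_k) (psi_h N_lt_k) !mul0rz subrr.
exists (psi N (h N) * d); first by rewrite mulf_neq0.
exists (g + h N *~ (z N * d)); first by apply: subgroupD; last apply: subgroupMz.
by rewrite phiD (additiveMz phiD) -z'd /z' mulrzBl -!mulrzA subrK.
Qed.

End TriangularSystem.

Definition hist (T : Type) (g : seq T -> T) (n : nat) : seq T :=
  iter n (fun s => rcons s (g s)) [::].

Lemma size_hist T (g : seq T -> T) n : size (hist g n) = n.
Proof. by elim: n => //= n IH; rewrite size_rcons IH. Qed.

Lemma nth_hist T (x0 : T) (g : seq T -> T) n k :
  (n < k)%N -> nth x0 (hist g k) n = g (hist g n).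
Proof.
elim: k => // k IH; rewrite ltnS leq_eqVlt => /orP[/eqP -> | n_lt_k] /=.
  by rewrite nth_rcons size_hist ltnn eqxx.
by rewrite nth_rcons size_hist n_lt_k IH.
Qed.

Lemma exists_separating_hom (G : zmodType) (I : Type) (iota : G -> I -> int)
    (H : set G) :
  {morph iota : x y / x + y} -> injective iota -> ~ finite_rank H ->
  forall s : seq G, exists ph : (G -> int) * G,
    [/\ {morph ph.1 : x y / x + y}, forall x, x \in s -> ph.1 x = 0,
        H ph.2 & ph.1 ph.2 != 0].
Proof.
move=> iotaD iota_inj H_inf s.
have [m [v [Hv v_indep s_lt_m]]] : exists m (v : 'I_m -> G),
    [/\ forall k, H (v k), Zindep v & (size s < m)%N].
  apply: contrapT => no_v; apply: H_inf; exists (size s) => m v Hv v_indep.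
  by rewrite leqNgt; apply/negP => s_lt_m; apply: no_v; exists m, v.
have [p [J [w [ws [j wvj]]]]] := exists_separating_coord_functional
  (Zindep_inj iotaD iota_inj v_indep) (fun t : 'I_(size s) => iota (nth 0 s t)) s_lt_m.
exists (coord_functional J w \o iota, v j); split => //=.
  by move=> x y; rewrite /= iotaD coord_functionalD.
move=> x xs; rewrite -(nth_index 0 xs).
exact: (ws (Ordinal (etrans (index_mem x s) xs))).
Qed.

Lemma exists_triangular_system (G : zmodType) (H : set G) :
  torsionless G -> ~ finite_rank H ->
  exists (psi : nat -> G -> int) (h : nat -> G),
    [/\ forall n, {morph psi n : x y / x + y}, forall n, H (h n),
        forall n, psi n (h n) != 0 & forall n k, (n < k)%N -> psi k (h n) = 0].
Proof.
move=> [I [iota [iotaD iota_inj]]] H_inf.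
have [S S_sep] := choice (exists_separating_hom iotaD iota_inj H_inf).
pose hs := hist (fun s => (S s).2).
exists (fun n => (S (hs n)).1), (fun n => (S (hs n)).2).
split=> [n | n | n | n k n_lt_k]; try by case: (S_sep (hs n)).
case: (S_sep (hs k)) => _ + _ _; apply.
have /= <- := nth_hist 0 (fun s => (S s).2) n_lt_k.
by rewrite mem_nth // size_hist.
Qed.

Theorem theorem4 (G : zmodType) :
  torsionless G ->
  (exists H : set G, is_subgroup H /\ ~ finite_rank H /\ binds H) ->
  exists phi : G -> Zomega,
    (forall x y, phi (x + y) = phi x + phi y) /\
    binds_in [set z : Zomega | exists g y, Zfin y /\ z = phi g + y] Zfin.
Proof.
move=> tl_G [H [subH [H_inf bindsH]]].
have [psi [h [psiD Hh psi_hh psi_h]]] := exists_triangular_system tl_G H_inf.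
exists (prod_map psi); split; first exact: prod_mapD.
apply: (binds_in_im_add (prod_mapD psiD) is_subgroup_Zfin bindsH).
by move=> z; apply: Zfin_multiple_in_image.
Qed.
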